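(* Let $C=\mathbb{S}^1\times\mathbb{R}$ be the flat Euclidean cylinder, with $\mathbb{S}^1=\mathbb{R}/\mathbb{Z}$, and let $f:C\to C$ be a geodesic-preserving bijection. Then $f$ is a composition of an isometry of $C$, an affine map in the $\mathbb{R}$-coordinate, and a twisting map.
   Context: $C$ carries the product of the standard flat metric on $\mathbb{R}/\mathbb{Z}$ and the standard metric on $\mathbb{R}$. A geodesic is the image of a locally isometric immersion of the whole real line; a bijection (not assumed continuous) is geodesic-preserving if it maps every geodesic onto a geodesic as a set. An affine map in the $\mathbb{R}$-coordinate is $(r_1,r_2)\mapsto(r_1,ar_2+b)$ with $a\neq 0$. For $\alpha\in\mathbb{R}$ the twisting map is $t_\alpha(r_1,r_2)=(r_1+\alpha r_2,\,r_2)$. *)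

From Stdlib Require Import Reals Lra.
Open Scope R_scope.

(* The flat cylinder C = (R/Z) x R, points represented by (r1, r2) with
   r1 the canonical representative in [0,1). *)
Definition Cyl : Type := { p : R * R | 0 <= fst p < 1 }.

Lemma frac_part_range (x : R) : 0 <= fst (frac_part x, 0) < 1.
Proof. simpl; destruct (base_fp x); lra. Qed.

Definition mkC (r1 r2 : R) : Cyl :=
  exist (fun p : R * R => 0 <= fst p < 1) (frac_part r1, r2)
        (frac_part_range r1).

Definition c1 (p : Cyl) : R := fst (proj1_sig p).
Definition c2 (p : Cyl) : R := snd (proj1_sig p).

Definition distS1 (a b : R) : R :=
  Rmin (frac_part (a - b)) (1 - frac_part (a - b)).

Definition distC (p q : Cyl) : R :=
  sqrt (distS1 (c1 p) (c1 q) ^ 2 + (c2 p - c2 q) ^ 2).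

Definition locally_isometric (g : R -> Cyl) : Prop :=
  forall t : R, exists eps : R, 0 < eps /\
    forall s s' : R, Rabs (s - t) < eps -> Rabs (s' - t) < eps ->
      distC (g s) (g s') = Rabs (s - s').

Definition geodesic (G : Cyl -> Prop) : Prop :=
  exists g : R -> Cyl, locally_isometric g /\
    forall p : Cyl, G p <-> exists t : R, g t = p.

Definition image (f : Cyl -> Cyl) (G : Cyl -> Prop) : Cyl -> Prop :=
  fun q => exists p, G p /\ f p = q.

Definition bijectiveC (f : Cyl -> Cyl) : Prop :=
  exists g : Cyl -> Cyl, (forall x, g (f x) = x) /\ (forall y, f (g y) = y).

Definition geodesic_preserving (f : Cyl -> Cyl) : Prop :=
  forall G : Cyl -> Prop, geodesic G -> geodesic (image f G).

Definition isometryC (g : Cyl -> Cyl) : Prop :=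
  bijectiveC g /\ forall p q, distC (g p) (g q) = distC p q.

Definition affineC (a b : R) (p : Cyl) : Cyl := mkC (c1 p) (a * c2 p + b).

Definition twist (alpha : R) (p : Cyl) : Cyl := mkC (c1 p + alpha * c2 p) (c2 p).

(* A locally isometric immersion of R into the flat cylinder is a straight line, so the
   geodesics are the horizontal circles [y = y0] and the helices [x = c + k y] mod 1.
   Helices of different slopes meet at least twice, while a circle meets each helix once
   and no other circle; hence a geodesic-preserving bijection [f] maps circles to circles
   and helices to helices, and [f (x, y) = (chi x + s0 phi y, phi y)] mod 1.  For every
   slope [k], the image of the helix [x = k y] shows that [phi] carries the fibres of
   [y |-> k y] mod 1 to those of [Y |-> t Y] mod 1 for some [t]; this makes [phi] midpoint
   affine, hence [phi - phi 0] additive, and comparing two slopes makes it multiplicative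
   up to scale, so [phi] is affine.  Finally [chi] induces an injective map of R/Z that
   is linear of slope [N] up to translation, which forces [N = 1] or [N = -1]. *)

From Stdlib Require Import Reals Lra Lia ZArith ProofIrrelevance Classical.
(* after Reals, whose [RiemannInt.c1] would otherwise shadow the cylinder coordinate [c1] *)
Open Scope R_scope.

Definition cong (x y : R) : Prop := exists n : Z, x - y = IZR n.

Lemma cong_refl x : cong x x.
Proof. exists 0%Z; simpl; ring. Qed.

Lemma cong_eq x y : x = y -> cong x y.
Proof. intros ->; apply cong_refl. Qed.

Lemma cong_sym x y : cong x y -> cong y x.
Proof. intros [n H]; exists (- n)%Z; rewrite opp_IZR; lra. Qed.

Lemma cong_trans x y z : cong x y -> cong y z -> cong x z.
Proof. intros [n H] [m H']; exists (n + m)%Z; rewrite plus_IZR; lra. Qed.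

Lemma cong_add x y x' y' : cong x y -> cong x' y' -> cong (x + x') (y + y').
Proof. intros [n H] [m H']; exists (n + m)%Z; rewrite plus_IZR; lra. Qed.

Lemma cong_opp x y : cong x y -> cong (- x) (- y).
Proof. intros [n H]; exists (- n)%Z; rewrite opp_IZR; lra. Qed.

Lemma cong_sub x y x' y' : cong x y -> cong x' y' -> cong (x - x') (y - y').
Proof. intros; apply cong_add; auto using cong_opp. Qed.

Lemma cong_sign_mul N x y : N = 1 \/ N = -1 -> cong x y -> cong (N * x) (N * y).
Proof.
  intros [-> | ->] H; [rewrite !Rmult_1_l; exact H|].
  replace (-1 * x) with (- x) by ring; replace (-1 * y) with (- y) by ring.
  now apply cong_opp.
Qed.

Lemma cong_small x y : cong x y -> Rabs (x - y) < 1 -> x = y.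
Proof.
  intros [n H] Ha. rewrite H in Ha. apply Rabs_def2 in Ha as [Hlt Hgt].
  apply (lt_IZR n 1) in Hlt. apply (lt_IZR (-1) n) in Hgt.
  assert (n = 0%Z) by lia. subst; simpl in H; lra.
Qed.

Lemma cong_unit_interval r r' : 0 <= r < 1 -> 0 <= r' < 1 -> cong r r' -> r = r'.
Proof. intros H H' Hc. apply cong_small; auto. apply Rabs_def1; lra. Qed.

Lemma frac_part_bounds x : 0 <= frac_part x < 1.
Proof. destruct (base_fp x); lra. Qed.

Lemma frac_part_cong x : cong (frac_part x) x.
Proof. exists (- Int_part x)%Z. unfold frac_part. rewrite opp_IZR. ring. Qed.

Lemma frac_part_id r : 0 <= r < 1 -> frac_part r = r.
Proof.
  intro H. apply cong_unit_interval; auto using frac_part_bounds, frac_part_cong.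
Qed.

Lemma c1_bounds p : 0 <= c1 p < 1.
Proof. destruct p as [[x y] H]; exact H. Qed.

Lemma c1_mkC x y : c1 (mkC x y) = frac_part x.
Proof. reflexivity. Qed.

Lemma c2_mkC x y : c2 (mkC x y) = y.
Proof. reflexivity. Qed.

Lemma c1_mkC_cong x y : cong (c1 (mkC x y)) x.
Proof. apply frac_part_cong. Qed.

Lemma Cyl_ext p q : c1 p = c1 q -> c2 p = c2 q -> p = q.
Proof.
  destruct p as [[x y] H], q as [[x' y'] H']; unfold c1, c2; simpl; intros -> ->.
  f_equal. apply proof_irrelevance.
Qed.

Lemma c1_cong_eq p q : cong (c1 p) (c1 q) -> c1 p = c1 q.
Proof. apply cong_unit_interval; apply c1_bounds. Qed.

Lemma Cyl_ext_cong p q : cong (c1 p) (c1 q) -> c2 p = c2 q -> p = q.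
Proof. intros; apply Cyl_ext; auto using c1_cong_eq. Qed.

Lemma eq_mkC p x y : cong (c1 p) x -> c2 p = y -> p = mkC x y.
Proof.
  intros H1 H2. apply Cyl_ext_cong; rewrite ?c2_mkC; auto.
  eapply cong_trans; [apply H1 | apply cong_sym, c1_mkC_cong].
Qed.

Lemma mkC_eq x y x' y' : cong x x' -> y = y' -> mkC x y = mkC x' y'.
Proof.
  intros. apply eq_mkC; rewrite ?c2_mkC; auto.
  eapply cong_trans; [apply c1_mkC_cong | auto].
Qed.

Definition centered_frac (x : R) : R := frac_part (x + / 2) - / 2.

Lemma centered_frac_bounds x : - / 2 <= centered_frac x < / 2.
Proof. unfold centered_frac. destruct (frac_part_bounds (x + / 2)). lra. Qed.

Lemma centered_frac_cong x : cong (centered_frac x) x.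
Proof.
  unfold centered_frac. destruct (frac_part_cong (x + / 2)) as [n H]. exists n. lra.
Qed.

Lemma centered_frac_uniq d x : - / 2 <= d < / 2 -> cong d x -> centered_frac x = d.
Proof.
  intros Hd Hc. apply cong_small.
  - eapply cong_trans; [apply centered_frac_cong | apply cong_sym; auto].
  - pose proof (centered_frac_bounds x). apply Rabs_def1; lra.
Qed.

Lemma centered_frac_compat x y : cong x y -> centered_frac x = centered_frac y.
Proof.
  intro H. apply centered_frac_uniq; [apply centered_frac_bounds|].
  eapply cong_trans; [apply centered_frac_cong | now apply cong_sym].
Qed.

Lemma Rabs_centered_frac_opp x : Rabs (centered_frac (- x)) = Rabs (centered_frac x).
Proof.
  pose proof (centered_frac_bounds x). pose proof (centered_frac_cong x) as Hc.
  destruct (Req_dec (centered_frac x) (- / 2)) as [E|E].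
  - (* the representative of [1/2] is [-1/2], not [1/2] *)
    assert (centered_frac (- x) = - / 2) as ->; [|now rewrite E].
    apply centered_frac_uniq; [lra|]. destruct Hc as [n Hn]. exists (- n - 1)%Z.
    rewrite minus_IZR, opp_IZR. simpl. lra.
  - assert (centered_frac (- x) = - centered_frac x) as ->.
    { apply centered_frac_uniq; [lra | now apply cong_opp]. }
    apply Rabs_Ropp.
Qed.

Lemma distS1_centered_frac a b : distS1 a b = Rabs (centered_frac (a - b)).
Proof.
  unfold distS1. set (r := centered_frac (a - b)).
  pose proof (centered_frac_bounds (a - b)) as Hr. fold r in Hr.
  assert (Hc : cong r (a - b)) by apply centered_frac_cong.
  destruct (Rle_or_lt 0 r) as [H|H].
  - assert (frac_part (a - b) = r) as ->.
    { apply cong_unit_interval; [apply frac_part_bounds | lra |].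
      eapply cong_trans; [apply frac_part_cong | now apply cong_sym]. }
    rewrite Rabs_right by lra. unfold Rmin; destruct Rle_dec; lra.
  - assert (frac_part (a - b) = r + 1) as ->.
    { apply cong_unit_interval; [apply frac_part_bounds | lra |].
      eapply cong_trans; [apply frac_part_cong|].
      apply cong_sym, (cong_trans _ r); [exists 1%Z; simpl; ring | exact Hc]. }
    rewrite Rabs_left by lra. unfold Rmin; destruct Rle_dec; lra.
Qed.

Lemma distC_centered_frac p q :
  distC p q = sqrt (centered_frac (c1 p - c1 q) ^ 2 + (c2 p - c2 q) ^ 2).
Proof. unfold distC. now rewrite distS1_centered_frac, pow2_abs. Qed.

Definition line (a b u1 u2 t : R) : Cyl := mkC (a + u1 * t) (b + u2 * t).

Lemma line_eq_iff a b u1 u2 a' b' v1 v2 r :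
  line a b u1 u2 r = line a' b' v1 v2 r <->
  cong (a + u1 * r) (a' + v1 * r) /\ b + u2 * r = b' + v2 * r.
Proof.
  unfold line. split.
  - intro E. split; [|exact (f_equal c2 E)].
    eapply cong_trans; [apply cong_sym, c1_mkC_cong|].
    rewrite (f_equal c1 E). apply c1_mkC_cong.
  - intros [H1 H2]. now apply mkC_eq.
Qed.

Lemma centered_frac_0 : centered_frac 0 = 0.
Proof. apply centered_frac_uniq; [lra | apply cong_refl]. Qed.

Lemma sqrt_pow2_abs d : sqrt (d ^ 2) = Rabs d.
Proof. rewrite <- sqrt_Rsqr_abs. f_equal. unfold Rsqr; ring. Qed.

Lemma distC_eq_abs p q d : distC p q = Rabs d ->
  centered_frac (c1 p - c1 q) ^ 2 + (c2 p - c2 q) ^ 2 = d ^ 2.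
Proof.
  rewrite distC_centered_frac, <- sqrt_pow2_abs. intro H.
  apply sqrt_inj in H; auto using pow2_ge_0.
  apply Rplus_le_le_0_compat; apply pow2_ge_0.
Qed.

Lemma line_locally_isometric a b u1 u2 :
  u1 ^ 2 + u2 ^ 2 = 1 -> locally_isometric (line a b u1 u2).
Proof.
  intros Hu t. exists (/ 4). split; [lra|]. intros s s' Hs Hs'.
  rewrite distC_centered_frac. unfold line. rewrite !c1_mkC, !c2_mkC.
  assert (Hd : Rabs (s - s') < / 2).
  { apply Rabs_def2 in Hs; apply Rabs_def2 in Hs'. apply Rabs_def1; lra. }
  assert (Hb : Rabs (u1 * (s - s')) < / 2).
  { assert (Rabs u1 <= 1) by (apply Rabs_le; nra).
    rewrite Rabs_mult. pose proof (Rabs_pos (s - s')). pose proof (Rabs_pos u1). nra. }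
  rewrite (centered_frac_uniq (u1 * (s - s'))).
  - rewrite <- sqrt_pow2_abs. f_equal.
    replace ((s - s') ^ 2) with ((u1 ^ 2 + u2 ^ 2) * (s - s') ^ 2) by (rewrite Hu; ring).
    ring.
  - apply Rabs_def2 in Hb. lra.
  - apply cong_sym. eapply cong_trans; [apply cong_sub; apply frac_part_cong|].
    apply cong_eq; ring.
Qed.

(* An isometric embedding of an interval into the Euclidean plane is affine: the
   parallelogram identity pins down the inner product with a fixed direction. *)
Lemma plane_isometry_affine (X Y : R -> R) t e :
  0 < e -> X t = 0 -> Y t = 0 ->
  (forall s s', Rabs (s - t) < e -> Rabs (s' - t) < e ->
     (X s - X s') ^ 2 + (Y s - Y s') ^ 2 = (s - s') ^ 2) ->
  exists u1 u2, u1 ^ 2 + u2 ^ 2 = 1 /\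
    forall s, Rabs (s - t) < e -> X s = u1 * (s - t) /\ Y s = u2 * (s - t).
Proof.
  intros He HX HY Hiso.
  assert (Ht : Rabs (t - t) < e) by (rewrite Rminus_diag, Rabs_R0; lra).
  assert (Hnorm : forall s, Rabs (s - t) < e -> X s ^ 2 + Y s ^ 2 = (s - t) ^ 2).
  { intros s Hs. rewrite <- (Hiso s t Hs Ht), HX, HY. ring. }
  set (h := e / 2).
  assert (Hh : Rabs (t + h - t) < e).
  { replace (t + h - t) with h by ring. unfold h. rewrite Rabs_right; lra. }
  exists (X (t + h) / h), (Y (t + h) / h).
  assert (Hu : (X (t + h) / h) ^ 2 + (Y (t + h) / h) ^ 2 = 1).
  { pose proof (Hnorm _ Hh) as A. replace (t + h - t) with h in A by ring.
    assert (h <> 0) by (unfold h; lra).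
    replace ((X (t + h) / h) ^ 2 + (Y (t + h) / h) ^ 2)
      with ((X (t + h) ^ 2 + Y (t + h) ^ 2) / h ^ 2) by (field; auto).
    rewrite A. field; auto. }
  split; auto. intros s Hs.
  set (u1 := X (t + h) / h) in *. set (u2 := Y (t + h) / h) in *.
  assert (Hdot : X s * u1 + Y s * u2 = s - t).
  { pose proof (Hiso _ _ Hs Hh) as B.
    replace (X (t + h)) with (h * u1) in B by (unfold u1, h; field; lra).
    replace (Y (t + h)) with (h * u2) in B by (unfold u2, h; field; lra).
    apply (Rmult_eq_reg_l (2 * h)); [|unfold h; lra].
    replace (2 * h * (X s * u1 + Y s * u2)) with
      ((X s ^ 2 + Y s ^ 2) + h ^ 2 * (u1 ^ 2 + u2 ^ 2)
       - ((X s - h * u1) ^ 2 + (Y s - h * u2) ^ 2)) by ring.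
    rewrite Hnorm, B, Hu by auto. ring. }
  assert (Hz : (X s - u1 * (s - t)) ^ 2 + (Y s - u2 * (s - t)) ^ 2 = 0).
  { replace ((X s - u1 * (s - t)) ^ 2 + (Y s - u2 * (s - t)) ^ 2) with
      ((X s ^ 2 + Y s ^ 2) - 2 * (s - t) * (X s * u1 + Y s * u2)
       + (s - t) ^ 2 * (u1 ^ 2 + u2 ^ 2)) by ring.
    rewrite Hnorm, Hdot, Hu by auto. ring. }
  pose proof (pow2_ge_0 (X s - u1 * (s - t))). pose proof (pow2_ge_0 (Y s - u2 * (s - t))).
  split; nra.
Qed.

Lemma locally_isometric_locally_line g : locally_isometric g -> forall t,
  exists e, 0 < e /\ exists u1 u2, u1 ^ 2 + u2 ^ 2 = 1 /\
    forall s, Rabs (s - t) < e ->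
      g s = line (c1 (g t) - u1 * t) (c2 (g t) - u2 * t) u1 u2 s.
Proof.
  intros Hg t. destruct (Hg t) as [eps [Heps Hd]].
  set (e := Rmin eps (/ 8)).
  assert (He : 0 < e) by (apply Rmin_glb_lt; lra).
  assert (He1 : e <= eps) by apply Rmin_l.
  assert (He2 : e <= / 8) by apply Rmin_r.
  set (X := fun s => centered_frac (c1 (g s) - c1 (g t))).
  set (Y := fun s => c2 (g s) - c2 (g t)).
  assert (Ht : Rabs (t - t) < e) by (rewrite Rminus_diag, Rabs_R0; lra).
  assert (HX : forall s, Rabs (s - t) < e -> Rabs (X s) < / 8).
  { intros s Hs. pose proof (distC_eq_abs _ _ _ (Hd s t ltac:(lra) ltac:(lra))) as D.
    fold (X s) (Y s) in D. apply Rabs_def2 in Hs.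
    pose proof (pow2_ge_0 (Y s)). apply Rabs_def1; nra. }
  destruct (plane_isometry_affine X Y t e He) as [u1 [u2 [Hu Hlin]]].
  - unfold X. now rewrite Rminus_diag, centered_frac_0.
  - unfold Y. ring.
  - intros s s' Hs Hs'.
    pose proof (distC_eq_abs _ _ _ (Hd s s' ltac:(lra) ltac:(lra))) as D.
    replace (Y s - Y s') with (c2 (g s) - c2 (g s')) by (unfold Y; ring).
    rewrite <- D. f_equal. f_equal. symmetry. apply centered_frac_uniq.
    + pose proof (HX s Hs) as A; pose proof (HX s' Hs') as B.
      apply Rabs_def2 in A; apply Rabs_def2 in B. lra.
    + unfold X. eapply cong_trans; [apply cong_sub; apply centered_frac_cong|].
      apply cong_eq; ring.
  - exists e. split; auto. exists u1, u2. split; auto. intros s Hs.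
    destruct (Hlin s Hs) as [Ex Ey]. unfold line. apply eq_mkC.
    + apply (cong_trans _ (c1 (g t) + X s)).
      * apply cong_sym. unfold X. eapply cong_trans; [apply cong_add; [apply cong_refl | apply centered_frac_cong]|].
        apply cong_eq; ring.
      * rewrite Ex. apply cong_eq; ring.
    + unfold Y in Ey. lra.
Qed.

Lemma line_eq_of_eq_on_interval a b u1 u2 a' b' v1 v2 al be : al < be ->
  (forall r, al < r < be -> line a b u1 u2 r = line a' b' v1 v2 r) ->
  forall r, line a b u1 u2 r = line a' b' v1 v2 r.
Proof.
  intros Hab H.
  set (r0 := (al + be) / 2).
  set (m := Rabs (u1 - v1) + 1).
  assert (Hm : 0 < m) by (pose proof (Rabs_pos (u1 - v1)); unfold m; lra).
  set (h := Rmin ((be - al) / 4) (/ (2 * m))).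
  assert (Hh : 0 < h) by (apply Rmin_glb_lt; [lra | apply Rinv_0_lt_compat; lra]).
  assert (Hh1 : h <= (be - al) / 4) by apply Rmin_l.
  assert (Hhm : h * m <= / 2).
  { pose proof (Rmult_le_compat_r m _ _ (Rlt_le _ _ Hm) (Rmin_r ((be - al) / 4) (/ (2 * m)))).
    fold h in H0. replace (/ (2 * m) * m) with (/ 2) in H0 by (field; lra). exact H0. }
  destruct (proj1 (line_eq_iff _ _ _ _ _ _ _ _ _) (H r0 ltac:(unfold r0; lra))) as [C0 B0].
  destruct (proj1 (line_eq_iff _ _ _ _ _ _ _ _ _) (H (r0 + h) ltac:(unfold r0 in *; lra)))
    as [C1 B1].
  assert (Hu2 : u2 = v2) by (apply (Rmult_eq_reg_r h); nra).
  subst v2. assert (Hb : b = b') by lra. subst b'.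
  assert (Hu1 : u1 = v1).
  { assert (D : cong ((u1 - v1) * h) 0).
    { destruct (cong_sub _ _ _ _ C1 C0) as [n Hn]. exists n. rewrite <- Hn. ring. }
    apply cong_small in D; [nra|].
    rewrite Rminus_0_r, Rabs_mult, (Rabs_right h) by lra.
    pose proof (Rabs_pos (u1 - v1)). unfold m in Hhm. nra. }
  subst v1. intro r. apply line_eq_iff. split; [|reflexivity].
  destruct C0 as [n Hn]. exists n. lra.
Qed.

Lemma line_continuation_nonneg g a b u1 u2 d :
  locally_isometric g -> 0 < d -> (forall r, Rabs r < d -> g r = line a b u1 u2 r) ->
  forall r, 0 <= r -> g r = line a b u1 u2 r.
Proof.
  intros Hg Hd Hloc.
  apply NNPP. intro Hn.
  apply not_all_ex_not in Hn as [r0 Hr0]. apply imply_to_and in Hr0 as [Hr0 Hbad].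
  set (E := fun T => 0 <= T /\ forall r, 0 <= r <= T -> g r = line a b u1 u2 r).
  assert (Hbound : bound E).
  { exists r0. intros T [HT HT']. destruct (Rle_or_lt T r0); auto.
    exfalso. apply Hbad, HT'. lra. }
  assert (Hd2 : E (d / 2)).
  { split; [lra|]. intros r Hr. apply Hloc. rewrite Rabs_right; lra. }
  destruct (completeness E Hbound (ex_intro _ _ Hd2)) as [M [HM1 HM2]].
  assert (HMd : d / 2 <= M) by (apply HM1; auto).
  assert (Hbelow : forall r, 0 <= r < M -> g r = line a b u1 u2 r).
  { intros r Hr. destruct (classic (exists T, E T /\ r <= T)) as [[T [[_ HT] HrT]]|HnT].
    - apply HT; lra.
    - exfalso. assert (M <= r); [|lra].
      apply HM2. intros T HT. destruct (Rle_or_lt T r); auto.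
      exfalso; apply HnT; exists T; split; auto; lra. }
  destruct (locally_isometric_locally_line g Hg M) as [eps [Heps [v1 [v2 [_ Hl]]]]].
  set (al := Rmax 0 (M - eps)).
  assert (Hal : al < M) by (apply Rmax_lub_lt; lra).
  assert (Hagree : forall r, line a b u1 u2 r =
             line (c1 (g M) - v1 * M) (c2 (g M) - v2 * M) v1 v2 r).
  { apply (line_eq_of_eq_on_interval _ _ _ _ _ _ _ _ al M Hal). intros r Hr.
    assert (0 <= al /\ M - eps <= al) by (split; [apply Rmax_l | apply Rmax_r]).
    rewrite <- Hbelow by lra. apply Hl. apply Rabs_def1; lra. }
  assert (HE : E (M + eps / 2)).
  { split; [lra|]. intros r Hr. destruct (Rlt_or_le r M).
    - apply Hbelow; lra.
    - rewrite Hagree. apply Hl. apply Rabs_def1; lra. }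
  specialize (HM1 _ HE). lra.
Qed.

Lemma locally_isometric_reverse g :
  locally_isometric g -> locally_isometric (fun s => g (- s)).
Proof.
  intros Hg t. destruct (Hg (- t)) as [e [He He']]. exists e; split; auto.
  intros s s' Hs Hs'. rewrite He'.
  - replace (- s - - s') with (- (s - s')) by ring; apply Rabs_Ropp.
  - replace (- s - - t) with (- (s - t)) by ring; now rewrite Rabs_Ropp.
  - replace (- s' - - t) with (- (s' - t)) by ring; now rewrite Rabs_Ropp.
Qed.

Lemma locally_isometric_line g : locally_isometric g ->
  exists a b u1 u2, u1 ^ 2 + u2 ^ 2 = 1 /\ forall r, g r = line a b u1 u2 r.
Proof.
  intros Hg. destruct (locally_isometric_locally_line g Hg 0) as [eps [Heps [u1 [u2 [Hu Hl]]]]].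
  set (a := c1 (g 0) - u1 * 0). set (b := c2 (g 0) - u2 * 0).
  exists a, b, u1, u2. split; auto.
  assert (Hl' : forall r, Rabs r < eps -> g r = line a b u1 u2 r).
  { intros r Hr. apply Hl. now rewrite Rminus_0_r. }
  assert (Hneg : forall s, line a b u1 u2 (- s) = line a b (- u1) (- u2) s).
  { intro s. unfold line. f_equal; ring. }
  intro r. destruct (Rle_or_lt 0 r) as [Hr|Hr].
  - exact (line_continuation_nonneg g a b u1 u2 eps Hg Heps Hl' r Hr).
  - replace r with (- - r) by ring. rewrite Hneg.
    apply (line_continuation_nonneg (fun s => g (- s)) _ _ _ _ eps
             (locally_isometric_reverse g Hg) Heps); [|lra].
    intros s Hs. rewrite <- Hneg. apply Hl'. now rewrite Rabs_Ropp.
Qed.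

Definition circle (y0 : R) (p : Cyl) : Prop := c2 p = y0.
Definition helix (k c : R) (p : Cyl) : Prop := cong (c1 p) (c + k * c2 p).

Definition is_circle (G : Cyl -> Prop) : Prop := exists y0, forall p, G p <-> circle y0 p.
Definition is_helix (G : Cyl -> Prop) : Prop := exists k c, forall p, G p <-> helix k c p.

Lemma geodesic_circle_or_helix G : geodesic G -> is_circle G \/ is_helix G.
Proof.
  intros [g [Hg HG]]. destruct (locally_isometric_line g Hg) as [a [b [u1 [u2 [Hu Hl]]]]].
  destruct (Req_dec u2 0) as [H0|H0].
  - left. exists b. intro p. rewrite HG. unfold circle. subst u2. split.
    + intros [t <-]. rewrite Hl. unfold line. rewrite c2_mkC. ring.
    + intro Hp. assert (u1 <> 0) by (intros ->; lra).
      exists ((c1 p - a) / u1). rewrite Hl. symmetry. apply eq_mkC.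
      * apply cong_eq. field. auto.
      * rewrite Hp; ring.
  - right. exists (u1 / u2), (a - u1 / u2 * b). intro p. rewrite HG. unfold helix. split.
    + intros [t <-]. rewrite Hl. unfold line. rewrite c2_mkC.
      eapply cong_trans; [apply c1_mkC_cong | apply cong_eq; field; auto].
    + intro Hp. exists ((c2 p - b) / u2). rewrite Hl. symmetry. apply eq_mkC.
      * eapply cong_trans; [apply Hp | apply cong_eq; field; auto].
      * field. auto.
Qed.

Lemma geodesic_circle y0 : geodesic (circle y0).
Proof.
  exists (line 0 y0 1 0). split; [apply line_locally_isometric; ring|].
  intro p. unfold circle. split.
  - intro Hp. exists (c1 p). symmetry. apply eq_mkC; [apply cong_eq; ring | lra].
  - intros [t <-]. unfold line. rewrite c2_mkC. ring.
Qed.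

Lemma geodesic_helix k c : geodesic (helix k c).
Proof.
  set (s := / sqrt (1 + k ^ 2)).
  assert (Hq : 0 < sqrt (1 + k ^ 2)) by (apply sqrt_lt_R0; nra).
  assert (Hs : 0 < s) by (apply Rinv_0_lt_compat; auto).
  assert (Hs2 : s ^ 2 * (1 + k ^ 2) = 1).
  { unfold s. rewrite pow_inv, <- Rsqr_pow2, Rsqr_sqrt by nra. field. nra. }
  exists (line c 0 (k * s) s). split; [apply line_locally_isometric; nra|].
  intro p. unfold helix. split.
  - intro Hp. exists (c2 p / s). symmetry. apply eq_mkC.
    + eapply cong_trans; [apply Hp | apply cong_eq; field; lra].
    + field. lra.
  - intros [t <-]. unfold line. rewrite c2_mkC.
    eapply cong_trans; [apply c1_mkC_cong | apply cong_eq; ring].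
Qed.

Lemma not_cong_half_0 : ~ cong (/ 2) 0.
Proof. intro H. apply cong_small in H; [lra|]. rewrite Rminus_0_r, Rabs_right; lra. Qed.

Lemma helix_c2_inj k c p q : helix k c p -> helix k c q -> c2 p = c2 q -> p = q.
Proof.
  unfold helix. intros Hp Hq He. apply Cyl_ext_cong; auto.
  eapply cong_trans; [apply Hp | rewrite He; now apply cong_sym].
Qed.

Lemma helices_meet_twice k c k' c' : k <> k' ->
  exists p q, p <> q /\ helix k c p /\ helix k' c' p /\ helix k c q /\ helix k' c' q.
Proof.
  intro Hk. set (y := (c' - c) / (k - k')). set (y' := y + / (k - k')).
  assert (Hkk : k - k' <> 0) by lra.
  exists (mkC (c + k * y) y), (mkC (c + k * y') y'). unfold helix. rewrite !c2_mkC.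
  repeat split; try apply c1_mkC_cong.
  - intro E. apply (f_equal c2) in E. rewrite !c2_mkC in E. unfold y' in E.
    assert (/ (k - k') <> 0) by (apply Rinv_neq_0_compat; auto). lra.
  - eapply cong_trans; [apply c1_mkC_cong | apply cong_eq; unfold y; field; auto].
  - eapply cong_trans; [apply c1_mkC_cong|]. exists 1%Z. unfold y', y. simpl. field. auto.
Qed.

Lemma helix_eq_of_common_point k c c' p : helix k c p -> helix k c' p ->
  forall q, helix k c q <-> helix k c' q.
Proof.
  unfold helix. intros H1 H2.
  assert (Hc : cong c c').
  { destruct (cong_trans _ _ _ (cong_sym _ _ H1) H2) as [n Hn]. exists n. lra. }
  intro q; split; intro H; (eapply cong_trans; [apply H | apply cong_add; [|apply cong_refl]]);
    auto using cong_sym.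
Qed.

Lemma image_intro f (G : Cyl -> Prop) p : G p -> image f G (f p).
Proof. intro; exists p; auto. Qed.

Section GeodesicImages.

Variable f : Cyl -> Cyl.
Hypothesis f_inj : forall p q, f p = f q -> p = q.
Hypothesis f_geod : geodesic_preserving f.

Lemma image_elim (G : Cyl -> Prop) p : image f G (f p) -> G p.
Proof. intros [q [Hq E]]. apply f_inj in E. now subst. Qed.

(* Two helices of different slopes meet twice, whereas a helix meets each circle once. *)
Lemma image_helix_not_circle k c : ~ is_circle (image f (helix k c)).
Proof.
  intros [Y HY].
  destruct (helices_meet_twice k c (k + 1) c ltac:(lra)) as [p [q [Hpq [Hp1 [Hp2 [Hq1 Hq2]]]]]].
  assert (Fp : c2 (f p) = Y) by (apply HY, image_intro; auto).
  destruct (geodesic_circle_or_helix _ (f_geod _ (geodesic_helix (k + 1) c)))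
    as [[Y' HY'] | [m [d Hmd]]].
  - assert (Y' = Y) by (rewrite <- Fp; symmetry; apply HY', image_intro; auto). subst Y'.
    set (r := mkC (c + (k + 1) * / 2) (/ 2)).
    assert (Hr : helix (k + 1) c r) by (unfold helix, r; rewrite c2_mkC; apply c1_mkC_cong).
    assert (Hr2 : helix k c r) by (apply image_elim, HY, HY', image_intro; auto).
    apply not_cong_half_0. unfold helix, r in Hr, Hr2. rewrite c2_mkC in Hr2.
    destruct (cong_trans _ _ _ (cong_sym _ _ (c1_mkC_cong _ _)) Hr2) as [n Hn].
    exists n. rewrite <- Hn. ring.
  - apply Hpq, f_inj, (helix_c2_inj m d); try (apply Hmd, image_intro; auto).
    rewrite Fp. symmetry. apply HY, image_intro; auto.
Qed.

Lemma image_helix k c : is_helix (image f (helix k c)).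
Proof.
  destruct (geodesic_circle_or_helix _ (f_geod _ (geodesic_helix k c))); auto.
  exfalso; eapply image_helix_not_circle; eauto.
Qed.

Lemma image_circle_not_helix y0 : ~ is_helix (image f (circle y0)).
Proof.
  intros [k' [c' Hk]].
  destruct (image_helix 0 0) as [m [d Hmd]].
  set (p0 := mkC 0 y0).
  assert (Hp0H : helix 0 0 p0).
  { unfold helix, p0. rewrite c2_mkC. eapply cong_trans; [apply c1_mkC_cong | apply cong_eq; ring]. }
  assert (Hp0C : circle y0 p0) by reflexivity.
  destruct (Req_dec m k') as [<- | E].
  - set (r := mkC (/ 2) y0).
    assert (Hr2 : helix 0 0 r).
    { apply image_elim, Hmd.
      apply (helix_eq_of_common_point m c' d (f p0));
        (apply Hk + apply Hmd); now apply image_intro. }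
    apply not_cong_half_0. unfold helix, r in Hr2. rewrite c2_mkC in Hr2.
    destruct (cong_trans _ _ _ (cong_sym _ _ (c1_mkC_cong _ _)) Hr2) as [n Hn].
    exists n. rewrite <- Hn. ring.
  - destruct (helices_meet_twice m d k' c' E) as [q1 [q2 [Hq [A1 [B1 [A2 B2]]]]]].
    apply Hmd in A1 as [a1 [Ha1 <-]]. apply Hmd in A2 as [a2 [Ha2 <-]].
    apply Hk, image_elim in B1. apply Hk, image_elim in B2.
    apply Hq. f_equal. apply (helix_c2_inj 0 0); auto. unfold circle in *. congruence.
Qed.

Lemma image_circle y0 : is_circle (image f (circle y0)).
Proof.
  destruct (geodesic_circle_or_helix _ (f_geod _ (geodesic_circle y0))); auto.
  exfalso; eapply image_circle_not_helix; eauto.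
Qed.

End GeodesicImages.

Section AdditiveMaps.

Variable A : R -> R.
Hypothesis A_add : forall x y, A (x + y) = A x + A y.

Lemma additive_0 : A 0 = 0.
Proof. pose proof (A_add 0 0) as H. rewrite Rplus_0_r in H. lra. Qed.

Lemma additive_opp x : A (- x) = - A x.
Proof. pose proof (A_add x (- x)) as H. rewrite Rplus_opp_r, additive_0 in H. lra. Qed.

Lemma additive_nat_mul n x : A (INR n * x) = INR n * A x.
Proof.
  induction n as [|n IH]; [rewrite !Rmult_0_l; apply additive_0|].
  rewrite S_INR, Rmult_plus_distr_r, A_add, IH, Rmult_1_l. ring.
Qed.

Lemma additive_IZR z : A (IZR z) = IZR z * A 1.
Proof.
  assert (Hnat : forall n, A (INR n) = INR n * A 1).
  { intro n. rewrite <- additive_nat_mul. now rewrite Rmult_1_r. }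
  destruct z as [|p|p].
  - change (IZR 0) with 0. rewrite Rmult_0_l. apply additive_0.
  - rewrite <- positive_nat_Z, <- INR_IZR_INZ. apply Hnat.
  - rewrite <- Pos2Z.opp_pos, opp_IZR, additive_opp, <- positive_nat_Z, <- INR_IZR_INZ, Hnat.
    ring.
Qed.

(* [A y = N * A (y / N)] is an integer multiple of [N := |A y| + 1], hence 0. *)
Lemma additive_integer_valued_0 : (forall y, exists n, A y = IZR n) -> forall y, A y = 0.
Proof.
  intros Hint y. destruct (Hint y) as [z Hz].
  destruct (Z.eq_dec z 0) as [->|Hz0]; auto.
  exfalso. set (N := (Z.to_nat (Z.abs z) + 1)%nat).
  assert (HN : INR N <> 0) by (unfold N; rewrite plus_INR; simpl;
    pose proof (pos_INR (Z.to_nat (Z.abs z))); lra).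
  destruct (Hint (y / INR N)) as [m Hm].
  pose proof (additive_nat_mul N (y / INR N)) as E.
  replace (INR N * (y / INR N)) with y in E by (field; auto).
  rewrite Hz, Hm, INR_IZR_INZ, <- mult_IZR in E. apply eq_IZR in E.
  assert (Z.of_nat N = Z.abs z + 1)%Z by (unfold N; rewrite Nat2Z.inj_add, Z2Nat.id; lia).
  rewrite H in E. apply (f_equal Z.abs) in E. rewrite Z.abs_mul in E.
  destruct (Z.eq_dec m 0) as [->|Hm0]; [lia|].
  assert (1 <= Z.abs m)%Z by lia. nia.
Qed.

Lemma additive_monotone_id : (forall x y, x <= y -> A x <= A y) -> A 1 = 1 ->
  forall x, A x = x.
Proof.
  intros Hmono H1 x.
  assert (Aint : forall z, A (IZR z) = IZR z) by (intro; rewrite additive_IZR, H1; ring).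
  assert (Bd : forall n, Rabs (INR n * A x - INR n * x) <= 1).
  { intro n. set (m := Int_part (INR n * x)).
    destruct (base_Int_part (INR n * x)) as [B1 B2]. fold m in B1, B2.
    pose proof (Hmono _ _ B1) as M1. rewrite Aint, additive_nat_mul in M1.
    pose proof (Hmono (INR n * x) (IZR m + 1) ltac:(lra)) as M2.
    rewrite A_add, Aint, H1, additive_nat_mul in M2.
    apply Rabs_le. lra. }
  destruct (Req_dec (A x) x) as [E|E]; auto. exfalso.
  set (d := Rabs (A x - x)).
  assert (Hd : 0 < d) by (apply Rabs_pos_lt; lra).
  destruct (INR_unbounded (/ d)) as [n Hn].
  pose proof (Bd n) as B.
  replace (INR n * A x - INR n * x) with (INR n * (A x - x)) in B by ring.
  rewrite Rabs_mult, (Rabs_right (INR n)) in B by (apply Rle_ge, pos_INR).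
  fold d in B. assert (/ d * d = 1) by (field; lra). nra.
Qed.

End AdditiveMaps.

Lemma ring_hom_id (A : R -> R) : (forall x y, A (x + y) = A x + A y) ->
  (forall x y, A (x * y) = A x * A y) -> A 1 = 1 -> forall x, A x = x.
Proof.
  intros Hadd Hmul H1. apply additive_monotone_id; auto.
  intros x y Hxy. replace y with (x + sqrt (y - x) * sqrt (y - x)) by (rewrite sqrt_sqrt; lra).
  rewrite Hadd, Hmul. pose proof (Rle_0_sqr (A (sqrt (y - x)))). unfold Rsqr in *. lra.
Qed.

Lemma IZR_mul_eq_1 n m : IZR n * IZR m = 1 -> IZR n = 1 \/ IZR n = -1.
Proof.
  intro H. rewrite <- mult_IZR in H. apply eq_IZR, Z.eq_mul_1 in H.
  destruct H as [-> | ->]; [left | right]; reflexivity.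
Qed.

(* Up to translation, [c] is the endomorphism [x |-> N x] of R/Z; injectivity makes
   [N] an integer unit. *)
Lemma cong_linear_slope_unit (c : R -> R) N :
  (forall x x', cong x x' -> c x = c x') ->
  (forall x x', cong (c x) (c x') -> cong x x') ->
  (forall x, cong (c x - c 0) (N * x)) -> N = 1 \/ N = -1.
Proof.
  intros Hcompat Hinj HN.
  pose proof (HN 1) as C1. rewrite (Hcompat 1 0) in C1 by (exists 1%Z; simpl; ring).
  destruct C1 as [z Hz]. rewrite Rminus_diag, Rmult_1_r, Rminus_0_l in Hz.
  assert (HNz : N = IZR (- z)) by (rewrite opp_IZR; lra). clear Hz.
  assert (Hshift : forall x, cong (N * x) 0 -> cong x 0).
  { intros x Hx. apply Hinj. destruct (cong_trans _ _ _ (HN x) Hx) as [n Hn].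
    exists n. lra. }
  destruct (Req_dec N 0) as [E|E].
  - exfalso. apply not_cong_half_0, Hshift. rewrite E, Rmult_0_l. apply cong_refl.
  - destruct (Hshift (/ N)) as [m Hm]; [exists 1%Z; simpl; field; auto|].
    rewrite HNz in *. apply (IZR_mul_eq_1 _ m). rewrite <- Hm. field. auto.
Qed.

Section GeodesicPreservingBijection.

Variable f : Cyl -> Cyl.
Hypothesis f_inj : forall p q, f p = f q -> p = q.
Hypothesis f_surj : forall q, exists p, f p = q.
Hypothesis f_geod : geodesic_preserving f.

Definition phi (y : R) : R := c2 (f (mkC 0 y)).

Lemma image_circle_eq y p : image f (circle y) p <-> circle (phi y) p.
Proof.
  destruct (image_circle f f_inj f_geod y) as [Y HY].
  replace (phi y) with Y; auto.
  symmetry. apply HY, image_intro. reflexivity.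
Qed.

Lemma c2_f p : c2 (f p) = phi (c2 p).
Proof. apply image_circle_eq, image_intro. reflexivity. Qed.

Lemma phi_inj y y' : phi y = phi y' -> y = y'.
Proof.
  intro H. assert (A : image f (circle y) (f (mkC 0 y'))).
  { apply image_circle_eq. unfold circle. now rewrite c2_f, c2_mkC. }
  apply (image_elim f f_inj) in A. unfold circle in A. now rewrite c2_mkC in A.
Qed.

Lemma phi_surj Y : exists y, phi y = Y.
Proof.
  destruct (f_surj (mkC 0 Y)) as [p Hp]. exists (c2 p).
  now rewrite <- c2_f, Hp, c2_mkC.
Qed.

Variables s0 d0 : R.
Hypothesis image_helix_0_0 : forall p, image f (helix 0 0) p <-> helix s0 d0 p.

(* Vertical lines are disjoint, so their images are the helices parallel to that
   of [helix 0 0]. *)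
Lemma image_vertical_line x : exists d,
  forall p, helix 0 x p -> cong (c1 (f p)) (d + s0 * phi (c2 p)).
Proof.
  destruct (image_helix f f_inj f_geod 0 x) as [m [d Hmd]].
  destruct (Req_dec m s0) as [<- | E].
  - exists d. intros p Hp. rewrite <- c2_f. apply Hmd, image_intro, Hp.
  - destruct (helices_meet_twice m d s0 d0 E) as [q [_ [_ [A [B _]]]]].
    apply Hmd in A as [a [Ha <-]]. apply image_helix_0_0, (image_elim f f_inj) in B.
    exists d0. intros p Hp. rewrite <- c2_f. apply image_helix_0_0, image_intro.
    now apply (helix_eq_of_common_point 0 x 0 a).
Qed.

(* Up to integers, [f (x, y) = (chi x + s0 * phi y, phi y)]: see [c1_f_cong]. *)
Definition chi (x : R) : R := c1 (f (mkC x 0)) - s0 * phi 0.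

Lemma c1_f_cong p : cong (c1 (f p)) (chi (c1 p) + s0 * phi (c2 p)).
Proof.
  destruct (image_vertical_line (c1 p)) as [d Hd].
  assert (A := Hd p ltac:(apply cong_eq; ring)).
  assert (B := Hd (mkC (c1 p) 0)
    ltac:(eapply cong_trans; [apply c1_mkC_cong | apply cong_eq; ring])).
  rewrite c2_mkC in B. unfold chi.
  eapply cong_trans; [apply A|]. apply cong_sym.
  destruct B as [n Hn]. exists n. rewrite <- Hn. ring.
Qed.

Lemma chi_compat x x' : cong x x' -> chi x = chi x'.
Proof. intro H. unfold chi. now rewrite (mkC_eq x 0 x' 0). Qed.

Lemma chi_cong_inj x x' : cong (chi x) (chi x') -> cong x x'.
Proof.
  intros [n Hn].
  assert (E : f (mkC x 0) = f (mkC x' 0)).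
  { apply Cyl_ext_cong; [exists n; unfold chi in Hn; lra|].
    now rewrite !c2_f, !c2_mkC. }
  apply f_inj, (f_equal c1) in E.
  eapply cong_trans; [apply cong_sym, (c1_mkC_cong x 0)|].
  rewrite E. apply c1_mkC_cong.
Qed.

(* Read off from the image of the helix [x = k y], which is again a helix. *)
Lemma chi_scaled_cong_phi k : exists d t, forall y, cong (chi (k * y)) (d + t * phi y).
Proof.
  destruct (image_helix f f_inj f_geod k 0) as [m [d Hmd]].
  exists d, (m - s0). intro y.
  set (p := mkC (k * y) y).
  assert (A : helix m d (f p)).
  { apply Hmd, image_intro. unfold helix, p. rewrite c2_mkC.
    eapply cong_trans; [apply c1_mkC_cong | apply cong_eq; ring]. }
  unfold helix in A. rewrite c2_f in A. unfold p in A. rewrite c2_mkC in A.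
  pose proof (c1_f_cong p) as B. unfold p in B. rewrite c1_mkC, c2_mkC in B.
  rewrite (chi_compat _ (k * y)) in B by apply frac_part_cong.
  destruct (cong_trans _ _ _ (cong_sym _ _ B) A) as [n Hn].
  exists n. rewrite <- Hn. ring.
Qed.

Lemma cong_phi_iff_cong k d t : (forall y, cong (chi (k * y)) (d + t * phi y)) ->
  forall y y', cong (t * phi y) (t * phi y') <-> cong (k * y) (k * y').
Proof.
  intros H y y'. split; intro C.
  - apply chi_cong_inj. eapply cong_trans; [apply H|].
    eapply cong_trans; [|apply cong_sym, H]. apply cong_add; [apply cong_refl | exact C].
  - pose proof (H y) as A. rewrite (chi_compat _ _ C) in A.
    destruct (cong_trans _ _ _ (cong_sym _ _ A) (H y')) as [n Hn].
    exists n. rewrite <- Hn. ring.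
Qed.

Lemma phi_slope_neq0 k d t : k <> 0 ->
  (forall y, cong (chi (k * y)) (d + t * phi y)) -> t <> 0.
Proof.
  intros Hk H ->. apply not_cong_half_0.
  replace (/ 2) with (k * / (2 * k)) by (field; auto). replace 0 with (k * 0) by ring.
  apply (cong_phi_iff_cong k d 0 H). apply cong_eq; ring.
Qed.

(* [k (w - y0) = n] is an integer; the helix of slope [k / n] then shows that [1 / n]
   is an integer too. *)
Lemma phi_unit_step k d t y0 w : k <> 0 ->
  (forall y, cong (chi (k * y)) (d + t * phi y)) ->
  t * (phi w - phi y0) = 1 \/ t * (phi w - phi y0) = -1 ->
  k * (w - y0) = 1 \/ k * (w - y0) = -1.
Proof.
  intros Hk Ht Hw.
  assert (C1 : cong (t * phi w) (t * phi y0)).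
  { destruct Hw as [Hw|Hw]; [exists 1%Z|exists (-1)%Z]; simpl; lra. }
  apply (cong_phi_iff_cong k d t Ht) in C1 as [n Hn].
  assert (Hn0 : IZR n <> 0).
  { intro E. rewrite E in Hn. assert (w = y0) as -> by (apply (Rmult_eq_reg_l k); lra).
    destruct Hw; lra. }
  set (k' := k / IZR n).
  destruct (chi_scaled_cong_phi k') as [d' [t' Ht']].
  assert (C2 : cong (k' * w) (k' * y0)).
  { exists 1%Z. unfold k'. simpl.
    replace (k / IZR n * w - k / IZR n * y0) with ((k * w - k * y0) / IZR n) by (field; auto).
    rewrite Hn. field. auto. }
  apply (cong_phi_iff_cong k' d' t' Ht') in C2 as [j Hj].
  assert (C3 : cong (k * (y0 + / k)) (k * y0)) by (exists 1%Z; simpl; field; auto).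
  apply (cong_phi_iff_cong k d t Ht) in C3 as [i Hi].
  assert (C4 : cong (t' * phi (y0 + / k)) (t' * phi y0)).
  { set (sg := t * (phi w - phi y0)) in Hw.
    assert (Ht'e : t' = IZR j * sg * t).
    { rewrite <- Hj. transitivity (t' * (sg * sg)).
      - destruct Hw as [-> | ->]; ring.
      - unfold sg. ring. }
    destruct Hw as [E|E]; rewrite E in Ht'e; [exists (j * i)%Z | exists (- (j * i))%Z];
      rewrite ?opp_IZR, mult_IZR, <- Hi, Ht'e; ring. }
  apply (cong_phi_iff_cong k' d' t' Ht') in C4 as [m Hm].
  assert (Hnm : IZR n * IZR m = 1) by (rewrite <- Hm; unfold k'; field; auto).
  rewrite <- Rmult_minus_distr_l in Hn. rewrite Hn. exact (IZR_mul_eq_1 _ _ Hnm).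
Qed.

Lemma phi_midpoint y0 h : phi (y0 + h) + phi (y0 - h) = 2 * phi y0.
Proof.
  destruct (Req_dec h 0) as [-> | Hh].
  { rewrite Rplus_0_r, Rminus_0_r. ring. }
  assert (Hk : / h <> 0) by (apply Rinv_neq_0_compat; auto).
  destruct (chi_scaled_cong_phi (/ h)) as [d [t Ht]].
  assert (Ht0 := phi_slope_neq0 _ _ _ Hk Ht).
  assert (Hstep : forall w, t * (phi w - phi y0) = 1 \/ t * (phi w - phi y0) = -1 ->
                    w = y0 + h \/ w = y0 - h).
  { intros w Hw. destruct (phi_unit_step _ _ _ y0 w Hk Ht Hw) as [E|E]; [left | right].
    - assert (w - y0 = h) by (apply (Rmult_eq_reg_l (/ h)); auto; rewrite E; field; auto).
      lra.
    - assert (w - y0 = - h) by (apply (Rmult_eq_reg_l (/ h)); auto; rewrite E; field; auto).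
      lra. }
  destruct (phi_surj (phi y0 + / t)) as [w1 Hw1].
  destruct (phi_surj (phi y0 - / t)) as [w2 Hw2].
  assert (Hit : / t <> 0) by (apply Rinv_neq_0_compat; auto).
  destruct (Hstep w1 ltac:(left; rewrite Hw1; field; auto)) as [-> | ->];
  destruct (Hstep w2 ltac:(right; rewrite Hw2; field; auto)) as [-> | ->];
  rewrite ?Hw1, ?Hw2 in *; lra.
Qed.

Definition dphi (y : R) : R := phi y - phi 0.

Lemma dphi_add a b : dphi (a + b) = dphi a + dphi b.
Proof.
  unfold dphi.
  pose proof (phi_midpoint ((a + b) / 2) ((a - b) / 2)) as J1.
  pose proof (phi_midpoint ((a + b) / 2) ((a + b) / 2)) as J2.
  replace ((a + b) / 2 + (a - b) / 2) with a in J1 by field.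
  replace ((a + b) / 2 - (a - b) / 2) with b in J1 by field.
  replace ((a + b) / 2 + (a + b) / 2) with (a + b) in J2 by field.
  replace ((a + b) / 2 - (a + b) / 2) with 0 in J2 by field.
  lra.
Qed.

Lemma dphi_1_neq0 : dphi 1 <> 0.
Proof. unfold dphi. intro E. assert (1 = 0) by (apply phi_inj; lra). lra. Qed.

Lemma chi_diff_cong_dphi k d t : (forall y, cong (chi (k * y)) (d + t * phi y)) ->
  forall y, cong (chi (k * y) - chi 0) (t * dphi y).
Proof.
  intros H y. pose proof (H 0) as C. rewrite Rmult_0_r in C.
  destruct (cong_sub _ _ _ _ (H y) C) as [n Hn]. exists n. unfold dphi. rewrite <- Hn. ring.
Qed.

(* Comparing the slopes [k] and [1]: [t1 dphi (k y) - tk dphi y] is additive and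
   integer valued, hence zero. *)
Lemma dphi_mul k y : dphi (k * y) = dphi k * dphi y / dphi 1.
Proof.
  destruct (chi_scaled_cong_phi 1) as [d1 [t1 H1]].
  assert (Ht1 : t1 <> 0) by (apply (phi_slope_neq0 1 d1); auto; lra).
  destruct (chi_scaled_cong_phi k) as [dk [tk Hk]].
  assert (G : forall y, t1 * dphi (k * y) - tk * dphi y = 0).
  { apply (additive_integer_valued_0 (fun y => t1 * dphi (k * y) - tk * dphi y)).
    - intros a b. cbv beta. rewrite Rmult_plus_distr_l, !dphi_add. ring.
    - intro y'. pose proof (chi_diff_cong_dphi _ _ _ Hk y') as A.
      pose proof (chi_diff_cong_dphi _ _ _ H1 (k * y')) as C. rewrite Rmult_1_l in C.
      destruct (cong_trans _ _ _ (cong_sym _ _ C) A) as [n Hn]. exists n. exact Hn. }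
  pose proof (G 1) as G1. rewrite Rmult_1_r in G1.
  pose proof dphi_1_neq0. apply (Rmult_eq_reg_l t1); auto.
  replace (t1 * (dphi k * dphi y / dphi 1)) with (t1 * dphi k / dphi 1 * dphi y) by (field; auto).
  replace (t1 * dphi k / dphi 1) with tk by (field_simplify_eq; auto; lra).
  pose proof (G y). lra.
Qed.

Lemma dphi_linear y : dphi y = dphi 1 * y.
Proof.
  pose proof dphi_1_neq0.
  assert (HA : forall x, dphi x / dphi 1 = x).
  { apply (ring_hom_id (fun x => dphi x / dphi 1)); cbv beta.
    - intros a b. rewrite dphi_add. field. auto.
    - intros a b. rewrite dphi_mul. field. auto.
    - field. auto. }
  rewrite <- (HA y) at 2. field. auto.
Qed.

Lemma chi_linear : exists T, forall x, cong (chi x - chi 0) (T * x).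
Proof.
  destruct (chi_scaled_cong_phi 1) as [d1 [t1 H1]].
  exists (t1 * dphi 1). intro x. pose proof (chi_diff_cong_dphi _ _ _ H1 x) as C.
  rewrite Rmult_1_l, dphi_linear in C. now rewrite Rmult_assoc.
Qed.

Lemma f_normal_form : exists K N s a b, (N = 1 \/ N = -1) /\ a <> 0 /\
  forall p, f p = mkC (K + N * c1 p + s * c2 p) (b + a * c2 p).
Proof.
  destruct chi_linear as [N HN].
  exists (chi 0 + s0 * phi 0), N, (s0 * dphi 1), (dphi 1), (phi 0).
  split; [|split; [apply dphi_1_neq0|]].
  - apply (cong_linear_slope_unit chi); auto using chi_compat, chi_cong_inj.
  - intro p.
    assert (E : phi (c2 p) = phi 0 + dphi 1 * c2 p) by (rewrite <- dphi_linear; unfold dphi; ring).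
    apply eq_mkC; [|now rewrite c2_f].
    eapply cong_trans; [apply c1_f_cong|].
    destruct (HN (c1 p)) as [n Hn]. exists n. rewrite <- Hn, E. ring.
Qed.

End GeodesicPreservingBijection.

Definition circle_isometry (N K : R) (q : Cyl) : Cyl := mkC (K + N * c1 q) (c2 q).

Lemma circle_isometry_isometryC N K : N = 1 \/ N = -1 -> isometryC (circle_isometry N K).
Proof.
  intro HN. assert (HNN : N * N = 1) by (destruct HN as [-> | ->]; ring).
  unfold circle_isometry. split.
  - exists (fun q => mkC (N * (c1 q - K)) (c2 q)).
    split; intro q; symmetry; apply eq_mkC; rewrite ?c1_mkC, ?c2_mkC; auto; apply cong_sym.
    + eapply cong_trans;
        [eapply (cong_sign_mul _ _ _ HN), cong_sub; [apply frac_part_cong | apply cong_refl]|].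
      apply cong_eq. transitivity (N * N * c1 q); [ring | rewrite HNN; ring].
    + eapply cong_trans;
        [apply cong_add; [apply cong_refl | eapply (cong_sign_mul _ _ _ HN), frac_part_cong]|].
      apply cong_eq. transitivity (K + N * N * (c1 q - K)); [ring | rewrite HNN; ring].
  - intros p q. rewrite !distC_centered_frac, !c1_mkC, !c2_mkC.
    rewrite (centered_frac_compat _ (N * (c1 p - c1 q))).
    + rewrite <- (pow2_abs (centered_frac (N * _))), <- (pow2_abs (centered_frac (c1 p - _))).
      destruct HN as [-> | ->]; rewrite ?Rmult_1_l; [reflexivity|].
      replace (-1 * (c1 p - c1 q)) with (- (c1 p - c1 q)) by ring.
      now rewrite Rabs_centered_frac_opp.
    + eapply cong_trans; [apply cong_sub; apply frac_part_cong | apply cong_eq; ring].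
Qed.

Lemma circle_isometry_affine_twist N K s a b p : N = 1 \/ N = -1 ->
  mkC (K + N * c1 p + s * c2 p) (b + a * c2 p) =
  circle_isometry N K (affineC a b (twist (N * s) p)).
Proof.
  intro HN. assert (HNN : N * N = 1) by (destruct HN as [-> | ->]; ring).
  unfold circle_isometry, affineC, twist. rewrite !c1_mkC, !c2_mkC, frac_part_id
    by apply frac_part_bounds.
  apply mkC_eq; [|ring]. apply cong_sym.
  eapply cong_trans; [apply cong_add; [apply cong_refl | eapply (cong_sign_mul _ _ _ HN), frac_part_cong]|].
  apply cong_eq. transitivity (K + N * c1 p + N * N * s * c2 p); [ring | rewrite HNN; ring].
Qed.

Theorem theorem4p1 (f : Cyl -> Cyl) :
  bijectiveC f -> geodesic_preserving f ->
  exists (g : Cyl -> Cyl) (a b alpha : R),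
    isometryC g /\ a <> 0 /\
    forall p : Cyl, f p = g (affineC a b (twist alpha p)).
Proof.
  intros [f' [Hf'f Hff']] Hgeod.
  assert (Hinj : forall p q, f p = f q -> p = q).
  { intros p q E. now rewrite <- (Hf'f p), <- (Hf'f q), E. }
  assert (Hsurj : forall q, exists p, f p = q) by (intro q; exists (f' q); auto).
  destruct (image_helix f Hinj Hgeod 0 0) as [s0 [d0 Hs0]].
  destruct (f_normal_form f Hinj Hsurj Hgeod s0 d0 Hs0) as [K [N [s [a [b [HN [Ha Hf]]]]]]].
  exists (circle_isometry N K), a, b, (N * s).
  split; [now apply circle_isometry_isometryC | split; [exact Ha|]].
  intro p. rewrite Hf. now apply circle_isometry_affine_twist.
Qed.
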